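(* For all integers $a\ge0$, $b\ge0$ and $d\ge1$, $$\sum_{c=0}^{b}\binom{b}{c}(2c+d-2)!!\,(2(a+b-c)+1)!!=\frac{(2a+1)!!\,(d-2)!!\,(2(a+b)+d+1)!!}{(2a+d+1)!!}.$$
   Context: $n!!$ denotes the double factorial, with the conventions $0!!=(-1)!!=1$. *)

From mathcomp Require Import all_boot all_order all_algebra.
Set Implicit Arguments. Unset Strict Implicit. Unset Printing Implicit Defensive.

Fixpoint dfact (n : nat) : nat :=
  match n with
  | 0 => 1
  | 1 => 1
  | (m.+1 as k).+1 => k.+1 * dfact m
  end.

(* Extension to integers with the convention (-1)!! = 1 (and 1 for all
   negative arguments; only -1 ever occurs in the statement). *)
Definition dfactz (z : int) : nat :=
  match z with
  | Posz n => dfact n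
  | Negz _ => 1
  end.

From mathcomp Require Import all_boot all_order all_algebra.
From mathcomp Require Import ring zify.
Import GRing.Theory Num.Theory.

(* Write S(a, b, d) for the sum on the left.  Pascal's rule C(b+1, c) =
   C(b, c) + C(b, c-1) splits S(a, b+1, d) into S(a+1, b, d) + S(a, b, d+2),
   and the right-hand side satisfies the same recurrence, because the two
   terms it produces carry the factors 2a+3 and d, whose sum 2a+d+3 cancels
   the new factor of (2a+d+3)!! in the denominator. *)

Definition dfactm2 (n : nat) : nat := dfactz (n%:Z - 2)%R.

Lemma dfactSS n : dfact n.+2 = n.+2 * dfact n.
Proof. by []. Qed.

Lemma dfact_gt0 n : 0 < dfact n.
Proof. by elim/ltn_ind: n => -[|[|n]] // IH; rewrite dfactSS muln_gt0 IH. Qed.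

Lemma dfactm2SS n : dfactm2 n.+2 = dfact n.
Proof. by rewrite /dfactm2 -[n.+2]addn2 PoszD addrK. Qed.

Lemma dfactm2_rec d : 0 < d -> dfactm2 d.+2 = d * dfactm2 d.
Proof. by case: d => [|[|d]] // _; rewrite !dfactm2SS. Qed.

Definition dfact_binom_sum (a b d : nat) : nat :=
  \sum_(0 <= c < b.+1)
     'C(b, c) * dfactm2 (2 * c + d) * dfact (2 * (a + b - c) + 1).

Lemma dfact_binom_sumS a b d :
  dfact_binom_sum a b.+1 d = dfact_binom_sum a.+1 b d + dfact_binom_sum a b d.+2.
Proof.
rewrite /dfact_binom_sum big_nat_recl // bin0.
under eq_bigr => c _ do rewrite binS !mulnDl.
rewrite big_split /= addnA; congr (_ + _); last first.
  by apply: eq_bigr => c _; congr (_ * dfactm2 _ * dfact _); lia.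
rewrite [in RHS]big_nat_recl // bin0 big_nat_recr // bin_small // !mul0n Monoid.mulm1.
congr (_ * dfact _ + _); first lia.
by apply: eq_bigr => c _; congr (_ * dfactm2 _ * dfact _); lia.
Qed.

Lemma dfact_binom_sum_closed a b d : 0 < d ->
  dfact_binom_sum a b d * dfact (2 * a + d + 1)
  = dfact (2 * a + 1) * dfactm2 d * dfact (2 * (a + b) + d + 1).
Proof.
elim: b a d => [|b IH] a d d_gt0.
  rewrite /dfact_binom_sum big_nat1 bin0 muln0 !addn0 subn0 add0n mul1n.
  by rewrite (mulnC (dfactm2 d)).
(* Multiplying by 2a+d+3 brings both induction hypotheses to the common
   factor (2a+d+3)!!. *)
apply/eqP; rewrite -(eqn_pmul2l (ltn0Sn (2 * a + d + 1).+1)) mulnCA -dfactSS.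
rewrite dfact_binom_sumS mulnDl.
have -> : (2 * a + d + 1).+2 = 2 * a.+1 + d + 1 by lia.
rewrite IH //.
have -> : 2 * a.+1 + d + 1 = 2 * a + d.+2 + 1 by lia.
rewrite IH //.
have -> : 2 * a.+1 + 1 = (2 * a + 1).+2 by lia.
have -> : 2 * (a.+1 + b) + d + 1 = 2 * (a + b.+1) + d + 1 by lia.
have -> : 2 * (a + b) + d.+2 + 1 = 2 * (a + b.+1) + d + 1 by lia.
rewrite dfactm2_rec // dfactSS; apply/eqP.
have -> : 2 * a + d.+2 + 1 = (2 * a + 1).+2 + d by lia.
ring.
Qed.

Local Open Scope ring_scope.

Theorem lemma3p5 (a b d : nat) (hd : (1 <= d)%N) :
  \sum_(0 <= c < b.+1)
     ('C(b, c)%:R * (dfactz (2 * c%:Z + d%:Z - 2))%:R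
        * (dfact (2 * (a + b - c) + 1)%N)%:R)
  = (dfact (2 * a + 1)%N)%:R * (dfactz (d%:Z - 2))%:R
      * (dfact (2 * (a + b) + d + 1)%N)%:R
      / (dfact (2 * a + d + 1)%N)%:R :> rat.
Proof.
have dfact_neq0 n : (dfact n)%:R != 0 :> rat by rewrite pnatr_eq0 -lt0n dfact_gt0.
apply: (canRL (mulfK (dfact_neq0 _))).
rewrite -/(dfactm2 d) -!natrM -dfact_binom_sum_closed // natrM natr_sum.
congr (_ * _); apply: eq_bigr => c _.
by rewrite /dfactm2 PoszD PoszM !natrM.
Qed.
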